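(* Assume Assumption 1, Assumption 2 and the null hypothesis $H_0:\ T_i(1)=T_i(0)$ for all $i$, and condition on $\boldsymbol{T}(1),\boldsymbol{T}(0)$. Then for each $1\le k\le K$, conditional on $N_k$, the variables $D_k$ and $N_{1k}$ are independent, and $$D_k\mid\boldsymbol{T}(1),\boldsymbol{T}(0),N_k\sim\mathrm{HGeom}(n_k,d_k,N_k),\qquad N_{1k}\mid\boldsymbol{T}(1),\boldsymbol{T}(0),N_k\sim\mathrm{Bin}(N_k,\phi_k).$$
   Context: There are $n$ units. Unit $i$ has potential event times $T_i(1),T_i(0)\ge 0$, potential censoring times $C_i(1),C_i(0)\in[0,\infty]$, and treatment indicator $Z_i\in\{0,1\}$; bold letters denote $n$-vectors. Assumption 1: conditional on $\boldsymbol{T}(1),\boldsymbol{T}(0),\boldsymbol{C}(1),\boldsymbol{C}(0)$, the $Z_i$ are i.i.d. Bernoulli$(p_1)$, $p_1=1-p_0\in(0,1)$. Assumption 2: $(\boldsymbol{C}(1),\boldsymbol{C}(0))$ is independent of $(\boldsymbol{T}(1),\boldsymbol{T}(0))$ and the pairs $(C_i(1),C_i(0))$ are i.i.d. across $i$. $G_z(c)=\Pr(C_i(z)\ge c)$, $G(t)=p_1G_1(t)+p_0G_0(t)$. Realized: $W_i=\min\{T_i,C_i\}$, $\Delta_i=\mathbb{1}(T_i\le C_i)$ with $T_i=Z_iT_i(1)+(1-Z_i)T_i(0)$, $C_i=Z_iC_i(1)+(1-Z_i)C_i(0)$. Let $t_1<\dots<t_K$ be the distinct values of $\{T_i(0)\}$,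 $d_k=\#\{i:T_i(0)=t_k\}$, $n_k=\#\{i:T_i(0)\ge t_k\}$, $\phi_k=p_1G_1(t_k)/G(t_k)$; $N_{1k}=\sum_iZ_i\mathbb{1}(W_i\ge t_k)$, $N_k=\sum_i\mathbb{1}(W_i\ge t_k)$, $D_k=\sum_i\Delta_i\mathbb{1}(W_i=t_k)$. $\mathrm{HGeom}(m,k,b)$: number of successes in $b$ draws without replacement from $m$ items containing $k$ successes; $\mathrm{Bin}(m,p)$: binomial. *)

From HB Require Import structures.
From mathcomp Require Import all_boot all_order all_algebra.
From mathcomp Require Import all_classical all_reals all_analysis measurable_realfun.
From mathcomp Require Export binomial_distribution.
Set Implicit Arguments. Unset Strict Implicit. Unset Printing Implicit Defensive.
Import Order.TTheory GRing.Theory Num.Theory.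
Local Open Scope classical_set_scope.
Local Open Scope ring_scope.

(* Hypergeometric pmf HGeom(m,k,b): number of successes in b draws without
   replacement from m items containing k successes. *)
Definition hgeom_pmf {R : realType} (m k b a : nat) : R :=
  if (a <= b)%N then ('C(k, a) * 'C(m - k, b - a))%:R / ('C(m, b))%:R else 0.

Definition event_times {R : realType} (n : nat) (T0 : 'I_n -> R) : seq R :=
  sort <=%R (undup [seq T0 i | i <- enum 'I_n]).

Definition nK {R : realType} (n : nat) (T0 : 'I_n -> R) : nat := size (event_times T0).
Definition tk {R : realType} (n : nat) (T0 : 'I_n -> R) (k : nat) : R :=
  nth 0 (event_times T0) k.
Definition dk {R : realType} (n : nat) (T0 : 'I_n -> R) (k : nat) : nat :=
  #|[set i : 'I_n | T0 i == tk T0 k]|.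
Definition nk {R : realType} (n : nat) (T0 : 'I_n -> R) (k : nat) : nat :=
  #|[set i : 'I_n | tk T0 k <= T0 i]|.

Section realized.
Context {R : realType} {Omega : Type} (n : nat)
  (T1 T0 : 'I_n -> R) (Z : 'I_n -> Omega -> bool) (C1 C0 : 'I_n -> Omega -> \bar R).
Definition Tobs (i : 'I_n) (w : Omega) : R := if Z i w then T1 i else T0 i.
Definition Cobs (i : 'I_n) (w : Omega) : \bar R := if Z i w then C1 i w else C0 i w.
Definition Wobs (i : 'I_n) (w : Omega) : \bar R := Order.min (Tobs i w)%:E (Cobs i w).
Definition Delta (i : 'I_n) (w : Omega) : bool := ((Tobs i w)%:E <= Cobs i w)%E.
Definition N1 (t : R) (w : Omega) : nat := #|[set i : 'I_n | Z i w && (t%:E <= Wobs i w)%E]|.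
Definition Nall (t : R) (w : Omega) : nat := #|[set i : 'I_n | (t%:E <= Wobs i w)%E]|.
Definition Dnum (t : R) (w : Omega) : nat :=
  #|[set i : 'I_n | Delta i w && (Wobs i w == t%:E)]|.
End realized.

From HB Require Import structures.
From mathcomp Require Import all_boot all_order all_algebra ring.
From mathcomp Require Import all_classical all_reals all_analysis measurable_realfun.
Import Order.TTheory GRing.Theory Num.Theory.
Set Implicit Arguments. Unset Strict Implicit. Unset Printing Implicit Defensive.
Local Open Scope classical_set_scope.
Local Open Scope ring_scope.

(* Under the null hypothesis every event time T_i = T_i(0) is deterministic, so at
   t = t_k only the units of R = {i | t <= T_i(0)} can be at risk, and unit i enters
   the counts only through its status (Z_i, [t <= C_i]). The statuses are independent
   across units, with P(Z = 1, t <= C) = p1 G1(t) =: q1, P(Z = 0, t <= C) = p0 G0(t)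
   =: q0 and P(C < t) =: r, so the at-risk set S = {i ∈ R | t <= C_i} and its treated
   part Y have the law P(S, Y) = q1^|Y| q0^|S \ Y| r^|R \ S| on chains Y ⊆ S ⊆ R.
   As N_k = |S|, N_1k = |Y| and D_k = |S ∩ A| with A = {i | T_i(0) = t}, the event
   {D_k = a, N_1k = b, N_k = m} has probability
   #{S ⊆ R | |S ∩ A| = a, |S| = m} * C(m, b) q1^b q0^(m-b) * r^(|R|-m),
   i.e. P(N_k = m) times HGeom(|R|, |A|, m) at a times Bin(m, q1 / (q1 + q0)) at b. *)

Section chains_of_subsets.
Local Close Scope classical_set_scope.
Variables (K : comPzRingType) (I : finType).
Implicit Types (A Rs S Y : {set I}) (a b c : K).

Lemma prod_indicator A a : \prod_i (if i \in A then a else 1) = a ^+ #|A|.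
Proof. by rewrite -big_mkcond prodr_const. Qed.

Definition chain_weight Rs S Y a b c : K :=
  if (Y \subset S) && (S \subset Rs)
  then a ^+ #|Y| * b ^+ #|S :\: Y| * c ^+ #|Rs :\: S| else 0.

Lemma prod_chain_indicator Rs S Y a b c :
  \prod_i (if i \in Y then (if (i \in S) && (i \in Rs) then a else 0)
           else if i \in S then (if i \in Rs then b else 0)
           else if i \in Rs then c else 1) = chain_weight Rs S Y a b c.
Proof.
rewrite /chain_weight; case: ifP => [/andP[YS SRs]|not_chain].
  rewrite -!prod_indicator -!big_split /=; apply: eq_bigr => i _; rewrite !inE.
  have /implyP := fintype.subsetP YS i; have /implyP := fintype.subsetP SRs i.
  by case: (i \in Y); case: (i \in S); case: (i \in Rs); rewrite ?mulr1 ?mul1r.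
have [i bad] : exists i, (i \in Y) && (i \notin S) || (i \in S) && (i \notin Rs).
  by move/negbT: not_chain; rewrite negb_and => /orP[] /subsetPn[i Ai nBi];
    exists i; rewrite Ai nBi ?orbT.
rewrite (bigD1 i) //=; case/orP: bad => /andP[-> /negbTE->] /=.
  by rewrite mul0r.
by rewrite if_same mul0r.
Qed.

Lemma sum_subset_powers S a b :
  \sum_(Y : {set I} | Y \subset S) a ^+ #|Y| * b ^+ #|S :\: Y| = (a + b) ^+ #|S|.
Proof.
transitivity (\prod_i ((if i \in S then a else 0) + (if i \in S then b else 1))).
  rewrite bigA_distr big_mkcond; apply: eq_bigr => Y _.
  rewrite (_ : (if _ then _ else _) = chain_weight S S Y a b 1); last first.
    by rewrite /chain_weight subxx andbT finset.setDv cards0 expr0 mulr1.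
  by rewrite -prod_chain_indicator; apply: eq_bigr => i _; case: (i \in Y); case: (i \in S).
by rewrite -prod_indicator; apply: eq_bigr => i _; case: (i \in S); rewrite ?addr0 ?add0r.
Qed.

Lemma sum_bool_pair (f : bool * bool -> K) :
  \sum_x f x = f (true, true) + f (true, false) + (f (false, true) + f (false, false)).
Proof.
rewrite (eq_bigr (fun x => f (x.1, x.2))) => [|[] //].
by rewrite -(pair_bigA _ (fun x y => f (x, y))) /= !big_bool /= addrA.
Qed.

(* [v i] encodes the status of unit [i]: whether it is treated, and whether it is
   still uncensored at the current time. *)
Definition at_risk Rs (v : {ffun I -> bool * bool}) : {set I} :=
  [set i in Rs | (v i).2].
Definition treated_at_risk Rs (v : {ffun I -> bool * bool}) : {set I} :=
  [set i in Rs | (v i).2 && (v i).1].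

Lemma sum_at_risk_fiber (w : bool * bool -> K) Rs S Y :
  \sum_x w x = 1 ->
  \sum_(v | (at_risk Rs v, treated_at_risk Rs v) == (S, Y)) \prod_i w (v i) =
  chain_weight Rs S Y (w (true, true)) (w (false, true))
    (w (true, false) + w (false, false)).
Proof.
(* The fibre is a product of per-unit choices; a unit outside Rs is unconstrained
   and contributes the total mass 1. *)
move=> w1; rewrite -prod_chain_indicator.
pose Q i := [pred x : bool * bool |
  ((i \in S) == (i \in Rs) && x.2) && ((i \in Y) == [&& i \in Rs, x.2 & x.1])].
transitivity (\prod_i \sum_(x | Q i x) w x); last first.
  apply: eq_bigr => i _; rewrite big_mkcond sum_bool_pair /Q /=.
  case: (i \in Y); case: (i \in S); case: (i \in Rs); rewrite /= ?addr0 ?add0r //.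
  by rewrite -w1 sum_bool_pair.
rewrite (bigA_distr_big_dep Q (fun _ x => w x)); apply: eq_bigl => v.
rewrite xpair_eqE; apply/andP/familyP => [[/eqP Sv /eqP Yv] i | Qv].
  by rewrite inE -Sv -Yv !inE !eqxx.
by split; apply/eqP/setP => i; have /andP[/eqP Si /eqP Yi] := Qv i; rewrite inE.
Qed.

Definition draws_meeting Rs A (a m : nat) : {set {set I}} :=
  [set S : {set I} | [&& S \subset Rs, #|S :&: A| == a & #|S| == m]].

Lemma card_draws_meeting Rs A (a m : nat) : A \subset Rs -> (a <= m)%N ->
  #|draws_meeting Rs A a m| = ('C(#|A|, a) * 'C(#|Rs| - #|A|, m - a))%N.
Proof.
move=> ARs am; pose split_A S := (S :&: A, S :\: A).
have split_inj : injective split_A.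
  by move=> S1 S2 [E1 E2]; rewrite -(setID S1 A) -(setID S2 A) E1 E2.
have -> : (#|Rs| - #|A| = #|Rs :\: A|)%N by rewrite cardsD (finset.setIidPr ARs).
rewrite -!cards_draws -cardsX.
rewrite -(card_imset _ split_inj); apply: eq_card => -[B1 B2].
rewrite [in RHS]inE /= !inE; apply/imsetP/andP => [[S] | []].
  rewrite inE => /and3P[SRs /eqP SA /eqP Sm] [-> ->].
  by rewrite subsetIr SA finset.setSD // cardsD SA Sm !eqxx.
move=> /andP[B1A /eqP B1a]; rewrite subsetD => /andP[/andP[B2Rs B2A] /eqP B2ma].
have capA : (B1 :|: B2) :&: A = B1.
  by rewrite finset.setIUl (finset.setIidPl B1A) (disjoint_setI0 B2A) finset.setU0.
have diffA : (B1 :|: B2) :\: A = B2.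
  rewrite finset.setDUl (finset.setDidPl B2A).
  by move: B1A; rewrite -finset.setD_eq0 => /eqP->; rewrite finset.set0U.
exists (B1 :|: B2); last by rewrite /split_A capA diffA.
rewrite inE finset.subUset (fintype.subset_trans B1A ARs) B2Rs capA B1a eqxx /=.
by rewrite -(cardsID A) capA diffA B1a B2ma subnKC.
Qed.

Lemma sum_chain_weight_pairs Rs (F : {set I} -> {set I} -> bool) a b c :
  \sum_(SY : {set I} * {set I} | F SY.1 SY.2) chain_weight Rs SY.1 SY.2 a b c =
  \sum_(S : {set I} | S \subset Rs) \sum_(Y : {set I} | (Y \subset S) && F S Y)
    a ^+ #|Y| * b ^+ (#|S| - #|Y|) * c ^+ (#|Rs| - #|S|).
Proof.
rewrite big_mkcond -(pair_bigA _ (fun S Y => if F S Y then chain_weight Rs S Y a b c else 0)).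
rewrite [RHS]big_mkcond; apply: eq_bigr => S _ /=.
case: (boolP (S \subset Rs)) => SRs; last first.
  by apply: big1 => Y _; rewrite /chain_weight (negbTE SRs) andbF if_same.
rewrite [RHS]big_mkcond; apply: eq_bigr => Y _; rewrite /chain_weight SRs andbT andbC.
case: (F S Y) (boolP (Y \subset S)) => //= -[] // YS.
by rewrite !cardsD (finset.setIidPr YS) (finset.setIidPr SRs).
Qed.

Definition counts_eq A (k l m : nat) (SY : {set I} * {set I}) : bool :=
  [&& #|SY.1 :&: A| == k, #|SY.2| == l & #|SY.1| == m].

Lemma sum_chain_weight_draws Rs A a b c (k l m : nat) :
  \sum_(SY | counts_eq A k l m SY) chain_weight Rs SY.1 SY.2 a b c =
  (#|draws_meeting Rs A k m| * 'C(m, l))%:R * (a ^+ l * b ^+ (m - l) * c ^+ (#|Rs| - m)).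
Proof.
rewrite (sum_chain_weight_pairs Rs (fun S Y => counts_eq A k l m (S, Y))) /counts_eq /=.
rewrite natrM -mulrA mulr_natl.
rewrite -sumr_const big_mkcond [RHS]big_mkcond; apply: eq_bigr => S _; rewrite !inE.
case: (S \subset Rs) => //=; case: (boolP ((#|S :&: A| == k) && (#|S| == m))).
  move=> /andP[/eqP SA /eqP Sm]; rewrite -Sm -(cards_draws S l) mulr_natl -sumr_const.
  by apply: eq_big => [Y | Y /andP[_ /and3P[_ /eqP-> _]]]; rewrite ?inE ?SA ?eqxx ?andbT.
move=> not_drawn; apply: big_pred0 => Y; apply/negbTE; apply: contra not_drawn.
by case/andP=> _ /and3P[-> _ ->].
Qed.

Lemma sum_chain_weight_size Rs a b c (m : nat) :
  \sum_(SY : {set I} * {set I} | #|SY.1| == m) chain_weight Rs SY.1 SY.2 a b c =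
  'C(#|Rs|, m)%:R * ((a + b) ^+ m * c ^+ (#|Rs| - m)).
Proof.
rewrite (sum_chain_weight_pairs Rs (fun S _ => #|S| == m)) -cards_draws mulr_natl.
rewrite -sumr_const big_mkcond [RHS]big_mkcond; apply: eq_bigr => S _; rewrite !inE.
case: (S \subset Rs) => //=; have [Sm | _] := eqVneq #|S| m; last first.
  by apply: big_pred0 => Y; rewrite andbF.
rewrite -Sm -sum_subset_powers big_distrl /=.
by apply: eq_big => [Y | Y]; rewrite andbT // => YS; rewrite cardsD (finset.setIidPr YS).
Qed.

End chains_of_subsets.

Lemma card_draws_meeting_hgeom (R : realType) (I : finType) (Rs A : {set I}) (a m : nat) :
  A \subset Rs ->
  #|draws_meeting Rs A a m|%:R = 'C(#|Rs|, m)%:R * hgeom_pmf #|Rs| #|A| m a :> R.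
Proof.
move=> ARs; rewrite /hgeom_pmf; case: leqP => [am | ma]; last first.
  rewrite mulr0; apply/eqP; rewrite pnatr_eq0 cards_eq0; apply/eqP/setP => S.
  rewrite !inE; apply/negbTE/and3P => -[_ /eqP SA /eqP Sm].
  by move: (subset_leq_card (subsetIl S A)); rewrite SA Sm leqNgt ma.
case: (leqP m #|Rs|) => [mRs | Rsm].
  rewrite card_draws_meeting // mulrC divfK // pnatr_eq0 -lt0n bin_gt0 //.
rewrite bin_small // mul0r; apply/eqP; rewrite pnatr_eq0 cards_eq0; apply/eqP/setP => S.
rewrite !inE; apply/negbTE/and3P => -[SRs _ /eqP Sm].
by move: (subset_leq_card SRs); rewrite Sm leqNgt Rsm.
Qed.

Lemma binomial_pmf_normalize (R : realType) (q1 q0 : R) (m b : nat) :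
  0 <= q1 -> 0 <= q0 ->
  'C(m, b)%:R * (q1 ^+ b * q0 ^+ (m - b)) =
  (q1 + q0) ^+ m * binomial_pmf m (q1 / (q1 + q0)) b.
Proof.
move=> q1ge0 q0ge0; rewrite /binomial_pmf /unstable.onem.
case: (leqP b m) => [bm | mb]; last by rewrite bin_small // mul0r mulr0n mulr0.
have [/eqP q_eq0 | q_neq0] := eqVneq (q1 + q0) 0.
  move: q_eq0; rewrite paddr_eq0 // => /andP[/eqP-> /eqP->].
  rewrite -exprD subnKC // addr0 expr0n; case: m bm => [|m] /=; last by rewrite mulr0 mul0r.
  by rewrite leqn0 => /eqP->; rewrite !expr0 bin0 !mulr1.
have -> : 1 - q1 / (q1 + q0) = q0 / (q1 + q0).
  by field.
rewrite !expr_div_n -mulr_natl -(subnKC bm) exprD addKn.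
by field; rewrite !expf_neq0.
Qed.

Lemma sum_chain_weight_counts (R : realType) (I : finType) (Rs A : {set I})
    (q1 q0 r : R) (a b m : nat) :
  A \subset Rs -> 0 <= q1 -> 0 <= q0 ->
  \sum_(SY | counts_eq A a b m SY) chain_weight Rs SY.1 SY.2 q1 q0 r =
  (\sum_(SY : {set I} * {set I} | #|SY.1| == m) chain_weight Rs SY.1 SY.2 q1 q0 r) *
  (hgeom_pmf #|Rs| #|A| m a * binomial_pmf m (q1 / (q1 + q0)) b).
Proof.
move=> ARs q1_ge0 q0_ge0.
rewrite sum_chain_weight_draws sum_chain_weight_size natrM card_draws_meeting_hgeom //.
transitivity ('C(#|Rs|, m)%:R * hgeom_pmf #|Rs| #|A| m a * r ^+ (#|Rs| - m) *
              ('C(m, b)%:R * (q1 ^+ b * q0 ^+ (m - b)))); first by ring.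
by rewrite binomial_pmf_normalize //; ring.
Qed.

Section finite_valued.
Context d (T : measurableType d) (R : realType) (mu : {measure set T -> \bar R}).
Context (U : finType) (X : T -> U).
Hypothesis measurable_fiber : forall u, measurable [set x | X x = u].

Lemma preimage_bigcup_fibers (F : pred U) :
  [set x | F (X x)] = \bigcup_(u in [set u | F u]) [set x | X x = u].
Proof.
apply/seteqP; split => [x Fx | x [u Fu /= Xu]]; first by exists (X x).
by rewrite /= Xu.
Qed.

Lemma measurable_fin_preimage (F : pred U) : measurable [set x | F (X x)].
Proof.
rewrite preimage_bigcup_fibers.
by apply: fin_bigcup_measurable => //; exact: finite_finset.
Qed.

Lemma measure_fin_preimage (F : pred U) :
  mu [set x | F (X x)] = (\sum_(u | F u) mu [set x | X x = u])%E.
Proof.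
rewrite preimage_bigcup_fibers measure_fin_bigcup //; last 2 first.
- exact: finite_finset.
- by move=> u1 u2 _ _ [x [/= <- <-]].
rewrite (fsbigE (enum [pred u | F u])) ?enum_uniq //; last 2 first.
- by move=> u /=; rewrite mem_enum.
- by move=> u /= Fu; rewrite mem_enum inE Fu.
rewrite big_enum_cond /=; apply: eq_bigl => u.
by apply/andP/idP => [[] // | Fu]; split => //; exact: mem_set.
Qed.

End finite_valued.

Lemma in_set_boolE (T : Type) (b : T -> bool) (x : T) : (x \in [set y | b y]) = b x.
Proof. by apply/idP/idP => [/set_mem | /mem_set]. Qed.

Section counts_under_null.
Context {R : realType} {Omega : Type} (n : nat).
Context (Z : 'I_n -> Omega -> bool) (C1 C0 : 'I_n -> Omega -> \bar R) (t : R).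

Definition status (w : Omega) : {ffun 'I_n -> bool * bool} :=
  [ffun i => (Z i w, (t%:E <= Cobs Z C1 C0 i w)%E)].

Definition at_risk_sets (Rs : {set 'I_n}) (w : Omega) : {set 'I_n} * {set 'I_n} :=
  (at_risk Rs (status w), treated_at_risk Rs (status w)).

Context (T1 T0 : 'I_n -> R).
Hypothesis null : forall i, T1 i = T0 i.
Let Rs := [set i | t <= T0 i]%SET.

Lemma Tobs_null i w : Tobs T1 T0 Z i w = T0 i.
Proof. by rewrite /Tobs null if_same. Qed.

Lemma Nall_at_risk w : Nall T1 T0 Z C1 C0 t w = #|(at_risk_sets Rs w).1|.
Proof.
apply: eq_card => i.
by rewrite in_set_boolE !inE ffunE /Wobs Tobs_null le_min lee_fin.
Qed.

Lemma N1_at_risk w : N1 T1 T0 Z C1 C0 t w = #|(at_risk_sets Rs w).2|.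
Proof.
apply: eq_card => i; rewrite in_set_boolE !inE ffunE /Wobs Tobs_null le_min lee_fin /=.
by case: (Z i w); rewrite ?andbT ?andbF.
Qed.

Lemma Dnum_at_risk w :
  Dnum T1 T0 Z C1 C0 t w = #|(at_risk_sets Rs w).1 :&: [set i | T0 i == t]%SET|.
Proof.
apply: eq_card => i; rewrite in_set_boolE !inE ffunE /Delta /Wobs Tobs_null /=.
have [-> | ne] := eqVneq (T0 i) t; rewrite ?lexx ?andbT ?andbF /=.
  by case: (boolP (t%:E <= _)%E) => //= tC; rewrite min_l // eqxx.
by apply/negbTE/andP => -[TC]; rewrite min_l // eqe (negbTE ne).
Qed.

Lemma counts_event_at_risk a b m :
  [set w | [/\ Dnum T1 T0 Z C1 C0 t w = a, N1 T1 T0 Z C1 C0 t w = b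
              & Nall T1 T0 Z C1 C0 t w = m]] =
  [set w | counts_eq [set i | T0 i == t]%SET a b m (at_risk_sets Rs w)].
Proof.
apply/seteqP; split => w; rewrite /= /counts_eq Dnum_at_risk N1_at_risk Nall_at_risk.
  by case=> -> -> ->; rewrite !eqxx.
by case/and3P => /eqP-> /eqP-> /eqP->.
Qed.

Lemma Nall_event_at_risk m :
  [set w | Nall T1 T0 Z C1 C0 t w = m] = [set w | #|(at_risk_sets Rs w).1| == m].
Proof. by apply/seteqP; split => w; rewrite /= Nall_at_risk => /eqP. Qed.

End counts_under_null.

Section independent_units.
Context {R : realType} {d : measure_display} {Omega : measurableType d}.
Context (P : probability Omega R) (n : nat) (p1 : R).
Context (Z : 'I_n -> Omega -> bool) (C1 C0 : 'I_n -> Omega -> \bar R).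
Context (mu : probability (\bar R * \bar R)%type R) (t : R).
Let C i w := (C1 i w, C0 i w).

Hypothesis mZ : forall i, measurable_fun setT (Z i).
Hypothesis mC : forall i, measurable_fun setT (C i).
Hypothesis PZ : forall i, P (Z i @^-1` [set true]) = p1%:E.
Hypothesis PC : forall i B, measurable B -> P (C i @^-1` B) = mu B.
Hypothesis indep : forall (A : 'I_n -> set bool) (B : 'I_n -> set (\bar R * \bar R)),
  (forall i, measurable (B i)) ->
  P (\bigcap_(i in [set: 'I_n]) (Z i @^-1` A i `&` C i @^-1` B i)) =
  (\prod_(i < n) P (Z i @^-1` A i) * \prod_(i < n) P (C i @^-1` B i))%E.

Definition cens_event (x : bool * bool) : set (\bar R * \bar R) :=
  [set y | (t%:E <= if x.1 then y.1 else y.2)%E = x.2].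

Definition unit_weight (x : bool * bool) : R :=
  (if x.1 then p1 else 1 - p1) * fine (mu (cens_event x)).

Lemma unit_weight_ge0 x : 0 <= p1 <= 1 -> 0 <= unit_weight x.
Proof.
move=> /andP[p1_ge0 p1_le1]; apply: mulr_ge0; last exact/fine_ge0/measure_ge0.
by case: x.1; rewrite ?subr_ge0.
Qed.

Lemma measurable_cens_event x : measurable (cens_event x).
Proof.
have ge_t (z : bool) : measurable [set y : \bar R * \bar R | t%:E <= if z then y.1 else y.2]%E.
  case: z.
    have := measurable_fst (T2 := \bar R) measurableT _ (emeasurable_itv `[t%:E, +oo[).
    by rewrite setTI set_itvcy.
  have := measurable_snd (T1 := \bar R) measurableT _ (emeasurable_itv `[t%:E, +oo[).
  by rewrite setTI set_itvcy.
case: x => z []; first exact: ge_t.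
rewrite (_ : cens_event _ = ~` [set y | t%:E <= if z then y.1 else y.2]%E).
  exact: measurableC (ge_t z).
by apply/seteqP; split => y; rewrite /cens_event /=; case: (t%:E <= _)%E.
Qed.

#[local] Hint Resolve measurable_cens_event : core.

Lemma status_fiberE v :
  [set w | status Z C1 C0 t w = v] =
  \bigcap_(i in [set: 'I_n]) (Z i @^-1` [set (v i).1] `&` C i @^-1` cens_event (v i)).
Proof.
apply/seteqP; split => w /=; first by move=> <- i _; rewrite /= ffunE.
move=> fiber; apply/ffunP => i; rewrite ffunE.
case: (v i) (fiber i I) => z c [/= Zz]; rewrite /Cobs Zz.
by rewrite /cens_event /= => ->.
Qed.

Lemma measurable_status_fiber v : measurable [set w | status Z C1 C0 t w = v].
Proof.
rewrite status_fiberE; apply: fin_bigcap_measurable => [|i _]; first exact: finite_finset.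
apply: measurableI.
  by rewrite -[_ @^-1` _]setTI; exact: mZ.
by rewrite -[_ @^-1` _]setTI; exact: mC.
Qed.

Lemma prob_treatment i b : P (Z i @^-1` [set b]) = (if b then p1 else 1 - p1)%:E.
Proof.
case: b; first exact: PZ.
have -> : Z i @^-1` [set false] = ~` (Z i @^-1` [set true]).
  by apply/seteqP; split => w /=; case: (Z i w).
by rewrite probability_setC ?PZ // -[_ @^-1` _]setTI; exact: mZ.
Qed.

Lemma prob_status v :
  P [set w | status Z C1 C0 t w = v] = (\prod_i unit_weight (v i))%:E.
Proof.
rewrite status_fiberE indep //.
have mu_fin x : mu (cens_event x) = (fine (mu (cens_event x)))%:E.
  by rewrite fineK // fin_num_measure.
rewrite (eq_bigr _ (fun i _ => prob_treatment i (v i).1)).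
rewrite (eq_bigr _ (fun i _ => PC i (measurable_cens_event (v i)))).
rewrite (eq_bigr _ (fun i _ => mu_fin (v i))).
by rewrite !prodEFin -EFinM -big_split.
Qed.

Lemma sum_unit_weight : \sum_x unit_weight x = 1.
Proof.
have cens_compl z :
    fine (mu (cens_event (z, false))) = 1 - fine (mu (cens_event (z, true))).
  apply: EFin_inj; rewrite EFinB !fineK ?fin_num_measure //.
  rewrite -probability_setC //; congr (mu _).
  by apply/seteqP; split => y; rewrite /cens_event /=; case: (t%:E <= _)%E.
by rewrite sum_bool_pair /unit_weight /= !cens_compl; ring.
Qed.

Lemma prob_at_risk Rs (F : pred ({set 'I_n} * {set 'I_n})) :
  P [set w | F (at_risk_sets Z C1 C0 t Rs w)] =
  (\sum_(SY | F SY) chain_weight Rs SY.1 SY.2 (unit_weight (true, true))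
     (unit_weight (false, true)) (unit_weight (true, false) + unit_weight (false, false)))%:E.
Proof.
pose X := at_risk_sets Z C1 C0 t Rs.
pose in_fiber SY v := (at_risk Rs v, treated_at_risk Rs v) == SY.
have fiberE SY : [set w | X w = SY] = [set w | in_fiber SY (status Z C1 C0 t w)].
  by apply/seteqP; split => w /eqP.
have mX SY : measurable [set w | X w = SY].
  rewrite fiberE; exact: (measurable_fin_preimage measurable_status_fiber (in_fiber SY)).
have prob_fiber SY : P [set w | X w = SY] =
    (chain_weight Rs SY.1 SY.2 (unit_weight (true, true)) (unit_weight (false, true))
       (unit_weight (true, false) + unit_weight (false, false)))%:E.
  rewrite fiberE (measure_fin_preimage P measurable_status_fiber (in_fiber SY)).
  rewrite (eq_bigr _ (fun v _ => prob_status v)) sumEFin.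
  by case: SY => S Y; rewrite sum_at_risk_fiber // sum_unit_weight.
by rewrite (measure_fin_preimage P mX) (eq_bigr _ (fun SY _ => prob_fiber SY)) sumEFin.
Qed.

End independent_units.

Theorem lemmaA3 (R : realType) (d : measure_display) (Omega : measurableType d)
  (P : probability Omega R) (n : nat) (p1 : R)
  (T1 T0 : 'I_n -> R) (Z : 'I_n -> Omega -> bool) (C1 C0 : 'I_n -> Omega -> \bar R)
  (mu : probability (\bar R * \bar R)%type R) :
  0 < p1 < 1 ->
  (forall i, 0 <= T1 i) -> (forall i, 0 <= T0 i) ->
  (forall i w, (0 <= C1 i w)%E) -> (forall i w, (0 <= C0 i w)%E) ->
  (forall i, measurable_fun setT (Z i)) ->
  (forall i, measurable_fun setT (fun w => (C1 i w, C0 i w))) ->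
  (* Assumption 1: Z_i i.i.d. Bernoulli(p1) *)
  (forall i, P (Z i @^-1` [set true]) = p1%:E) ->
  (* Assumption 2: the pairs (C_i(1), C_i(0)) are i.i.d. with common law mu *)
  (forall i (B : set (\bar R * \bar R)), measurable B ->
     P ((fun w => (C1 i w, C0 i w)) @^-1` B) = mu B) ->
  (* Assumptions 1-2 (independence): Z_1..Z_n, (C_1(1),C_1(0)),..,(C_n(1),C_n(0))
     are mutually independent *)
  (forall (A : 'I_n -> set bool) (B : 'I_n -> set (\bar R * \bar R)),
     (forall i, measurable (B i)) ->
     P (\bigcap_(i in [set: 'I_n])
          (Z i @^-1` A i `&` (fun w => (C1 i w, C0 i w)) @^-1` B i)) =
     (\prod_(i < n) P (Z i @^-1` A i) *
      \prod_(i < n) P ((fun w => (C1 i w, C0 i w)) @^-1` B i))%E) ->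
  (* null hypothesis *)
  (forall i, T1 i = T0 i) ->
  forall k : 'I_(nK T0),
  let t := tk T0 k in
  let G1 := fine (mu [set x | (t%:E <= x.1)%E]) in
  let G0 := fine (mu [set x | (t%:E <= x.2)%E]) in
  let phi := p1 * G1 / (p1 * G1 + (1 - p1) * G0) in
  forall a b m : nat,
  P [set w | [/\ Dnum T1 T0 Z C1 C0 t w = a, N1 T1 T0 Z C1 C0 t w = b
                & Nall T1 T0 Z C1 C0 t w = m]] =
  (P [set w | Nall T1 T0 Z C1 C0 t w = m] *
   (hgeom_pmf (nk T0 k) (dk T0 k) m a * binomial_pmf m phi b)%:E)%E.
Proof.
move=> p1_bounds _ _ _ _ mZ mC PZ PC indep null k t G1 G0 phi a b m.
have p1_01 : 0 <= p1 <= 1 by case/andP: p1_bounds => /ltW-> /ltW->.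
set Rs := [set i | t <= T0 i]%SET; set A := [set i | T0 i == t]%SET.
have ARs : A \subset Rs by apply/fintype.subsetP => i; rewrite !inE => /eqP->.
rewrite counts_event_at_risk // Nall_event_at_risk //.
rewrite (prob_at_risk t mZ mC PZ PC indep _ (counts_eq A a b m)).
rewrite (prob_at_risk t mZ mC PZ PC indep _ (fun SY => #|SY.1| == m)) -EFinM.
have -> : nk T0 k = #|Rs| by apply: eq_card => i; rewrite in_set_boolE inE.
have -> : dk T0 k = #|A| by apply: eq_card => i; rewrite in_set_boolE inE.
by congr (_%:E); apply: sum_chain_weight_counts => //; exact: unit_weight_ge0.
Qed.
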